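(* Assume $\gamma\neq\pm2$. For $m=1,2,3$ and all indices $i,j,k$, $$\Big\{\tfrac{\mathfrak h^{(m+1)}}{m+1},\,p_k\Big\}_{(1)}=\Big\{\tfrac{\mathfrak h^{(m)}}{m},\,p_k\Big\}_{(2)},\qquad \Big\{\tfrac{\mathfrak h^{(m+1)}}{m+1},\,q_{ij}\Big\}_{(1)}=\Big\{\tfrac{\mathfrak h^{(m)}}{m},\,q_{ij}\Big\}_{(2)}.$$
   Context: Fix $N\ge2$, $\nu\neq0$. Variables $p_1,\dots,p_N>0$, $q_1,\dots,q_N$ pairwise distinct with fixed ordering; $q_{ij}=q_i-q_j$, $\mathfrak s_{ij}=\mathrm{sgn}(q_i-q_j)$, $\mathfrak s_{ii}=0$. $T=\sum_{i,j}\sqrt{p_ip_j}\cosh\frac{\nu}{2}(q_i-q_j)E_{ij}$, $A=\sum_{i,j}\sqrt{p_ip_j}\sinh\frac{\nu}{2}(q_i-q_j)E_{ij}$, $S=\sum_{i,j}\sqrt{p_ip_j}\,\mathfrak s_{ij}\sinh\frac{\nu}{2}(q_i-q_j)E_{ij}$, and $\mathfrak h^{(m)}=m\,\mathrm{tr}\big((T+\frac{\gamma}{2}A)(S+A)^{m-1}\big)$ (e.g. $\mathfrak h^{(1)}=\sum_ip_i$). First bracket: $\{p_i,p_k\}_{(1)}=0$, $\{q_{ij},p_k\}_{(1)}=\delta_{ik}-\delta_{jk}$, $\{q_{ij},q_{kl}\}_{(1)}=0$. With $\mathcal Q_{ik}=(\gamma-2)e^{\nu|q_{ik}|}-(\gamma+2)e^{-\nu|q_{ik}|}+4$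 and $\mathcal S_{ik}=(\gamma-2)e^{\nu|q_{ik}|}+(\gamma+2)e^{-\nu|q_{ik}|}$, second bracket: $\{p_i,p_k\}_{(2)}=\frac{\nu}{4}\mathfrak s_{ik}p_ip_k(\mathcal Q_{ik}-4)$, $\{q_{ij},p_k\}_{(2)}=-\frac14p_k(\mathcal S_{ik}-\mathcal S_{jk})$, $\{q_{ij},q_{kl}\}_{(2)}=-\frac{1}{4\nu}(\mathfrak s_{ik}\mathcal Q_{ik}-\mathfrak s_{jk}\mathcal Q_{jk}-\mathfrak s_{il}\mathcal Q_{il}+\mathfrak s_{jl}\mathcal Q_{jl})$; both extended by the Leibniz rule. *)

From HB Require Import structures.
From mathcomp Require Import all_boot all_order all_algebra.
From mathcomp Require Import all_classical all_reals all_analysis.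
Set Implicit Arguments. Unset Strict Implicit. Unset Printing Implicit Defensive.
Import Order.TTheory GRing.Theory Num.Theory.
Import numFieldNormedType.Exports.
Local Open Scope ring_scope.

Section Defs.
Variable R : realType.

Definition coshR (x : R) : R := (expR x + expR (- x)) / 2.
Definition sinhR (x : R) : R := (expR x - expR (- x)) / 2.

Definition obs N := ('I_N -> R) -> ('I_N -> R) -> R.

Definition upd N (x : 'I_N -> R) (i : 'I_N) (t : R) : 'I_N -> R :=
  fun k => if k == i then t else x k.

Definition dP N (F : obs N) (p q : 'I_N -> R) (i : 'I_N) : R :=
  derive1 (fun t => F (upd p i t) q) (p i).
Definition dQ N (F : obs N) (p q : 'I_N -> R) (i : 'I_N) : R :=
  derive1 (fun t => F p (upd q i t)) (q i).

(* A bracket is given by its values on coordinates: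
   PP p q i k = {p_i,p_k},  QP p q i k = {q_i,p_k},  QQ p q i k = {q_i,q_k};
   {p_i,q_k} = - {q_k,p_i}.  Extension by the Leibniz rule. *)
Record bracket N := Bracket {
  PP : ('I_N -> R) -> ('I_N -> R) -> 'I_N -> 'I_N -> R;
  QP : ('I_N -> R) -> ('I_N -> R) -> 'I_N -> 'I_N -> R;
  QQ : ('I_N -> R) -> ('I_N -> R) -> 'I_N -> 'I_N -> R }.

Definition PB N (B : bracket N) (F G : obs N) (p q : 'I_N -> R) : R :=
  \sum_(i < N) \sum_(k < N)
    (  dP F p q i * dP G p q k * PP B p q i k
     + dQ F p q i * dP G p q k * QP B p q i k
     - dP F p q i * dQ G p q k * QP B p q k i
     + dQ F p q i * dQ G p q k * QQ B p q i k).

Definition sgnq N (q : 'I_N -> R) (i j : 'I_N) : R := Num.sg (q i - q j).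

Definition Qc N (gamma nu : R) (q : 'I_N -> R) (i k : 'I_N) : R :=
  (gamma - 2) * expR (nu * `|q i - q k|) - (gamma + 2) * expR (- (nu * `|q i - q k|)) + 4.
Definition Sc N (gamma nu : R) (q : 'I_N -> R) (i k : 'I_N) : R :=
  (gamma - 2) * expR (nu * `|q i - q k|) + (gamma + 2) * expR (- (nu * `|q i - q k|)).

Definition B1 N : bracket N := Bracket
  (fun _ _ _ _ => 0)
  (fun _ _ i k => if i == k then 1 else 0)
  (fun _ _ _ _ => 0).

(* second bracket, written on the lifted coordinates q_i; the q_{ij} = q_i - q_j
   brackets of the paper are recovered by bilinearity *)
Definition B2 N (gamma nu : R) : bracket N := Bracket
  (fun p q i k => nu / 4 * sgnq q i k * p i * p k * (Qc gamma nu q i k - 4))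
  (fun p q i k => - (1 / 4) * p k * Sc gamma nu q i k)
  (fun p q i k => - (1 / (4 * nu)) * (sgnq q i k * Qc gamma nu q i k)).

Definition Tm N (nu : R) (p q : 'I_N -> R) : 'M[R]_N :=
  \matrix_(i, j) (Num.sqrt (p i * p j) * coshR (nu / 2 * (q i - q j))).
Definition Am N (nu : R) (p q : 'I_N -> R) : 'M[R]_N :=
  \matrix_(i, j) (Num.sqrt (p i * p j) * sinhR (nu / 2 * (q i - q j))).
Definition Sm N (nu : R) (p q : 'I_N -> R) : 'M[R]_N :=
  \matrix_(i, j) (Num.sqrt (p i * p j) * sgnq q i j * sinhR (nu / 2 * (q i - q j))).

Fixpoint mxpow N (M : 'M[R]_N) (k : nat) : 'M[R]_N :=
  match k with 0%N => 1%:M | k'.+1 => M *m mxpow M k' end.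

Definition hfrak N (nu gamma : R) (m : nat) : obs N := fun p q =>
  m%:R * \tr ((Tm nu p q + (gamma / 2) *: Am nu p q)
              *m mxpow (Sm nu p q + Am nu p q) (m.-1)).

Definition pcoord N (k : 'I_N) : obs N := fun p _ => p k.
Definition qdiff N (i j : 'I_N) : obs N := fun _ q => q i - q j.

End Defs.

From HB Require Import structures.
From mathcomp Require Import all_boot all_order all_algebra.
From mathcomp Require Import all_classical all_reals all_analysis.
From mathcomp Require Import ring lra.
Set Implicit Arguments.
Unset Strict Implicit.
Import Order.TTheory GRing.Theory Num.Theory.
Local Open Scope ring_scope.

(* Put X = T + gamma/2 A and Y = S + A, so that h^(m)/m = tr (X Y^(m-1)).  By the
   Leibniz rule, the derivatives of tr (X Y^n) in p_i and in q_i are traces of words in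
   X, Y and E_ii X + X E_ii, E_ii Y + Y E_ii (resp. [E_ii, X'], [E_ii, Y'], where X', Y'
   are the entrywise derivatives in q_a - q_b).  Expanding the traces, both sides of
   each identity become sums over n-tuples of indices, and after averaging over cyclic
   rotations of the tuple the summands agree.  With e_a = exp (nu q_a / 2), every entry
   is a rational expression in the e_a and sqrt p_a once the order of the q's involved
   is fixed (Y_ab vanishes unless q_b < q_a), so each summand identity is checked by
   field arithmetic in each ordering of its indices.  Since
   {F, q_ij}_1 = - dF/dp_i + dF/dp_j, the q-identities amount to the statement that
   - dh^(m+1)/dp_i - {h^(m), q_i}_2 (suitably normalised) does not depend on i. *)

Section RealDerivative.
Variable R : realType.

Lemma is_derive_add (f g : R -> R) (t df dg : R) :
  is_derive t 1 f df -> is_derive t 1 g dg ->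
  is_derive t 1 (fun s => f s + g s) (df + dg).
Proof. exact: is_deriveD. Qed.

Lemma is_derive_sub (f g : R -> R) (t df dg : R) :
  is_derive t 1 f df -> is_derive t 1 g dg ->
  is_derive t 1 (fun s => f s - g s) (df - dg).
Proof. exact: is_deriveB. Qed.

Lemma is_derive_scale (c : R) (f : R -> R) (t df : R) :
  is_derive t 1 f df -> is_derive t 1 (fun s => c * f s) (c * df).
Proof. by move=> hf; have := is_deriveZ c hf. Qed.

Lemma is_derive_mul (f g : R -> R) (t df dg : R) :
  is_derive t 1 f df -> is_derive t 1 g dg ->
  is_derive t 1 (fun s => f s * g s) (df * g t + f t * dg).
Proof.
move=> hf hg; apply: is_derive_eq (is_deriveM hf hg) _.
by rewrite addrC [df * _]mulrC.
Qed.

Lemma is_derive_sum_fun n (h : 'I_n -> R -> R) (t : R) (dh : 'I_n -> R) :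
  (forall i, is_derive t 1 (h i) (dh i)) ->
  is_derive t 1 (fun s => \sum_(i < n) h i s) (\sum_(i < n) dh i).
Proof.
move=> hh; have := is_derive_sum hh.
suff -> : \sum_(i < n) h i = (fun s => \sum_(i < n) h i s) by [].
by apply/funext => s; rewrite fct_sumE.
Qed.

Lemma is_derive_expR_scale (c d : R) :
  is_derive d 1 (fun x => expR (c * x)) (c * expR (c * d)).
Proof.
have hg : is_derive d 1 (fun x : R => c * x) c.
  by have := is_derive_scale c (is_derive_id d 1); rewrite mulr1.
have hf : is_derive ((fun x : R => c * x) d) 1 expR (expR (c * d)).
  exact: is_derive_expR.
by have := is_derive1_comp (f := expR) (g := fun x : R => c * x) hf hg; rewrite mulrC.
Qed.

Lemma is_derive_coshR_scale (c d : R) :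
  is_derive d 1 (fun x => coshR (c * x)) (c * sinhR (c * d)).
Proof.
have H := is_derive_scale 2^-1
  (is_derive_add (is_derive_expR_scale c d) (is_derive_expR_scale (- c) d)).
under [fun x => _]funext => x do rewrite /coshR -mulNr mulrC.
by apply: is_derive_eq H _; rewrite /sinhR !mulNr; field.
Qed.

Lemma is_derive_sinhR_scale (c d : R) :
  is_derive d 1 (fun x => sinhR (c * x)) (c * coshR (c * d)).
Proof.
have H := is_derive_scale 2^-1 (is_derive_add (is_derive_expR_scale c d)
  (is_derive_scale (-1) (is_derive_expR_scale (- c) d))).
under [fun x => _]funext => x do
  rewrite /sinhR -mulNr mulrC -[X in _ - X]mul1r -mulNr.
by apply: is_derive_eq H _; rewrite /coshR !mulNr; field.
Qed.

End RealDerivative.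

Section MatrixDerivative.
Variable R : realType.

Definition is_derive_mx m n (f : R -> 'M[R]_(m, n)) (t : R) (D : 'M[R]_(m, n)) :=
  forall a b, is_derive t 1 (fun s => f s a b) (D a b).

Lemma is_derive_mxD m n (f g : R -> 'M[R]_(m, n)) t Df Dg :
  is_derive_mx f t Df -> is_derive_mx g t Dg ->
  is_derive_mx (fun s => f s + g s) t (Df + Dg).
Proof.
move=> hf hg a b; rewrite mxE.
under [fun s => _]funext => s do rewrite mxE.
exact: is_derive_add.
Qed.

Lemma is_derive_mx_cst m n (M : 'M[R]_(m, n)) t : is_derive_mx (fun _ => M) t 0.
Proof. by move=> a b; rewrite mxE; exact: is_derive_cst. Qed.

Lemma is_derive_mxM m n k (f : R -> 'M[R]_(m, n)) (g : R -> 'M[R]_(n, k)) t Df Dg :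
  is_derive_mx f t Df -> is_derive_mx g t Dg ->
  is_derive_mx (fun s => f s *m g s) t (Df *m g t + f t *m Dg).
Proof.
move=> hf hg a b; rewrite !mxE -big_split /=.
under [fun s => _]funext => s do rewrite mxE.
by apply: is_derive_sum_fun => c; exact: is_derive_mul.
Qed.

Fixpoint mxpow_deriv n (Y D : 'M[R]_n) (k : nat) : 'M[R]_n :=
  match k with 0%N => 0 | k'.+1 => D *m mxpow Y k' + Y *m mxpow_deriv Y D k' end.

Lemma is_derive_mxpow n (f : R -> 'M[R]_n) t Df k :
  is_derive_mx f t Df ->
  is_derive_mx (fun s => mxpow (f s) k) t (mxpow_deriv (f t) Df k).
Proof.
move=> hf; elim: k => [|k IH] /=; first exact: is_derive_mx_cst.
exact: is_derive_mxM.
Qed.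

Lemma is_derive_mxtrace n (f : R -> 'M[R]_n) t Df :
  is_derive_mx f t Df -> is_derive t 1 (fun s => \tr (f s)) (\tr Df).
Proof. by move=> hf; apply: is_derive_sum_fun => i; exact: hf. Qed.

End MatrixDerivative.

Arguments is_derive_mxM {R m n k f g t Df Dg}.
Arguments is_derive_mxpow {R n f t Df} k.
Arguments is_derive_mxtrace {R n f t Df}.

(* Named iterated sums: rewriting with the lemmas below merges sums of sums into a
   single sum whose summand can then be handled pointwise. *)
Section IteratedSums.
Variables (R : comPzRingType) (I : finType).

Definition sum1 (f : I -> R) := \sum_x f x.
Definition sum2 (f : I -> I -> R) := \sum_x \sum_y f x y.
Definition sum3 (f : I -> I -> I -> R) := \sum_x \sum_y \sum_z f x y z.

Lemma sum1D f g : sum1 f + sum1 g = sum1 (fun x => f x + g x).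
Proof. by rewrite /sum1 -big_split. Qed.
Lemma sum1B f g : sum1 f - sum1 g = sum1 (fun x => f x - g x).
Proof. by rewrite /sum1 -sumrB. Qed.
Lemma sum1N f : - sum1 f = sum1 (fun x => - f x).
Proof. by rewrite /sum1 -sumrN. Qed.
Lemma sum1Zl c f : c * sum1 f = sum1 (fun x => c * f x).
Proof. by rewrite /sum1 big_distrr. Qed.
Lemma sum1Zr c f : sum1 f * c = sum1 (fun x => f x * c).
Proof. by rewrite /sum1 big_distrl. Qed.

Lemma sum2D f g : sum2 f + sum2 g = sum2 (fun x y => f x y + g x y).
Proof. by rewrite /sum2 -big_split; apply: eq_bigr => x _; rewrite -big_split. Qed.
Lemma sum2B f g : sum2 f - sum2 g = sum2 (fun x y => f x y - g x y).
Proof. by rewrite /sum2 -sumrB; apply: eq_bigr => x _; rewrite -sumrB. Qed.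
Lemma sum2N f : - sum2 f = sum2 (fun x y => - f x y).
Proof. by rewrite /sum2 -sumrN; apply: eq_bigr => x _; rewrite -sumrN. Qed.
Lemma sum2Zl c f : c * sum2 f = sum2 (fun x y => c * f x y).
Proof. by rewrite /sum2 big_distrr; apply: eq_bigr => x _; rewrite big_distrr. Qed.
Lemma sum2Zr c f : sum2 f * c = sum2 (fun x y => f x y * c).
Proof. by rewrite /sum2 big_distrl; apply: eq_bigr => x _; rewrite big_distrl. Qed.

Lemma sum3D f g : sum3 f + sum3 g = sum3 (fun x y z => f x y z + g x y z).
Proof.
rewrite /sum3 -big_split; apply: eq_bigr => x _.
by rewrite -big_split; apply: eq_bigr => y _; rewrite -big_split.
Qed.
Lemma sum3B f g : sum3 f - sum3 g = sum3 (fun x y z => f x y z - g x y z).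
Proof.
rewrite /sum3 -sumrB; apply: eq_bigr => x _.
by rewrite -sumrB; apply: eq_bigr => y _; rewrite -sumrB.
Qed.
Lemma sum3N f : - sum3 f = sum3 (fun x y z => - f x y z).
Proof.
rewrite /sum3 -sumrN; apply: eq_bigr => x _.
by rewrite -sumrN; apply: eq_bigr => y _; rewrite -sumrN.
Qed.
Lemma sum3Zl c f : c * sum3 f = sum3 (fun x y z => c * f x y z).
Proof.
rewrite /sum3 big_distrr; apply: eq_bigr => x _.
by rewrite big_distrr; apply: eq_bigr => y _; rewrite big_distrr.
Qed.

Lemma sum2_swap f : sum2 (fun x y => f y x) = sum2 f.
Proof. by rewrite /sum2 exchange_big. Qed.

Lemma sum3_rot f : sum3 (fun x y z => f y z x) = sum3 f.
Proof. by rewrite /sum3 exchange_big; apply: eq_bigr => y _; rewrite exchange_big. Qed.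

End IteratedSums.

Section SymmetrizedSums.
Variables (R : numFieldType) (I : finType).

Lemma sum2_sym (F G : I -> I -> R) :
  (forall x y, F x y + F y x = G x y + G y x) -> sum2 F = sum2 G.
Proof.
move=> FG; have sym2 (H : I -> I -> R) : sum2 (fun x y => H x y + H y x) = 2%:R * sum2 H.
  by rewrite -sum2D (sum2_swap H); ring.
apply: (@mulfI _ 2%:R); first by rewrite pnatr_eq0.
by rewrite -!sym2 /sum2; apply: eq_bigr => x _; apply: eq_bigr => y _; exact: FG.
Qed.

Lemma sum3_sym (F G : I -> I -> I -> R) :
  (forall x y z, F x y z + F y z x + F z x y = G x y z + G y z x + G z x y) ->
  sum3 F = sum3 G.
Proof.
move=> FG; have sym3 (H : I -> I -> I -> R) :
    sum3 (fun x y z => H x y z + H y z x + H z x y) = 3%:R * sum3 H.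
  by rewrite -!sum3D (sum3_rot H) (sum3_rot (fun x y z => H z x y)); ring.
apply: (@mulfI _ 3%:R); first by rewrite pnatr_eq0.
rewrite -!sym3 /sum3; apply: eq_bigr => x _; apply: eq_bigr => y _.
by apply: eq_bigr => z _; exact: FG.
Qed.

End SymmetrizedSums.

Section TraceDelta.
Variables (R : comPzRingType) (n : nat).
Implicit Types (A B C D F : 'M[R]_n) (i : 'I_n).

Lemma delta_mulmxE A i a b : (delta_mx i i *m A) a b = (a == i)%:R * A a b.
Proof.
rewrite mxE (bigD1 i) //= big1 ?addr0; last first.
  by move=> c /negPf ci; rewrite mxE ci andbF mul0r.
by rewrite mxE eqxx andbT; case: eqP => [->|] //; rewrite !mul0r.
Qed.

Lemma mulmx_deltaE A i a b : (A *m delta_mx i i) a b = A a b * (b == i)%:R.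
Proof.
rewrite mxE (bigD1 i) //= big1 ?addr0.
  by rewrite mxE eqxx /=; case: (eqVneq b i) => [->|bi]; rewrite ?mulr1 // !mulr0.
by move=> c /negPf ci; rewrite mxE ci /= mulr0.
Qed.

Lemma delta_mx_anticommE c A i a b :
  (c *: (delta_mx i i *m A + A *m delta_mx i i)) a b =
  c * ((a == i)%:R * A a b + A a b * (b == i)%:R).
Proof. by rewrite mxE [in LHS]mxE delta_mulmxE mulmx_deltaE. Qed.

Lemma delta_mx_commE A i a b :
  (delta_mx i i *m A - A *m delta_mx i i) a b = (a == i)%:R * A a b - A a b * (b == i)%:R.
Proof. by rewrite mxE [X in _ + X = _]mxE delta_mulmxE mulmx_deltaE. Qed.

Lemma mxtrace_delta0 A i : \tr (delta_mx i i *m A) = A i i.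
Proof.
rewrite /mxtrace (bigD1 i) //= big1 ?addr0 ?delta_mulmxE ?eqxx ?mul1r //.
by move=> c /negPf ci; rewrite delta_mulmxE ci mul0r.
Qed.
Lemma mxtrace_delta1 A B i : \tr (A *m (delta_mx i i *m B)) = (B *m A) i i.
Proof. by rewrite mxtrace_mulC -mulmxA mxtrace_delta0. Qed.
Lemma mxtrace_delta2 A B C i :
  \tr (A *m (B *m (delta_mx i i *m C))) = (C *m (A *m B)) i i.
Proof. by rewrite mulmxA mxtrace_delta1. Qed.
Lemma mxtrace_delta3 A B C D i :
  \tr (A *m (B *m (C *m (delta_mx i i *m D)))) = (D *m (A *m (B *m C))) i i.
Proof. by rewrite mulmxA mxtrace_delta2 -mulmxA. Qed.
Lemma mxtrace_delta4 A B C D F i :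
  \tr (A *m (B *m (C *m (D *m (delta_mx i i *m F))))) =
  (F *m (A *m (B *m (C *m D)))) i i.
Proof. by rewrite mulmxA mxtrace_delta3 -!mulmxA. Qed.
Lemma mxtrace_deltar1 A i : \tr (A *m delta_mx i i) = A i i.
Proof. by rewrite mxtrace_mulC mxtrace_delta0. Qed.
Lemma mxtrace_deltar2 A B i : \tr (A *m (B *m delta_mx i i)) = (A *m B) i i.
Proof. by rewrite mulmxA mxtrace_deltar1. Qed.
Lemma mxtrace_deltar3 A B C i :
  \tr (A *m (B *m (C *m delta_mx i i))) = (A *m (B *m C)) i i.
Proof. by rewrite mulmxA mxtrace_deltar2 -mulmxA. Qed.
Lemma mxtrace_deltar4 A B C D i :
  \tr (A *m (B *m (C *m (D *m delta_mx i i)))) = (A *m (B *m (C *m D))) i i.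
Proof. by rewrite mulmxA mxtrace_deltar3 -!mulmxA. Qed.

Lemma mulmx2_diag A B k : (A *m B) k k = sum1 (fun x => A k x * B x k).
Proof. by rewrite mxE. Qed.
Lemma mulmx3_diag A B C k :
  (A *m (B *m C)) k k = sum2 (fun x y => A k x * (B x y * C y k)).
Proof.
rewrite mxE /sum2; apply: eq_bigr => x _.
by rewrite mxE big_distrr /=; apply: eq_bigr => y _.
Qed.
Lemma mulmx4_diag A B C D k :
  (A *m (B *m (C *m D))) k k = sum3 (fun x y z => A k x * (B x y * (C y z * D z k))).
Proof.
rewrite mxE /sum3; apply: eq_bigr => x _.
by rewrite mxE big_distrr /=; apply: eq_bigr => y _; rewrite mxE !big_distrr.
Qed.

End TraceDelta.

Definition Xmat (R : realType) N (nu gamma : R) (p q : 'I_N -> R) : 'M[R]_N :=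
  Tm nu p q + (gamma / 2) *: Am nu p q.
Definition Ymat (R : realType) N (nu : R) (p q : 'I_N -> R) : 'M[R]_N :=
  Sm nu p q + Am nu p q.

Lemma hfrak_div (R : realType) N (nu gamma : R) (p q : 'I_N -> R) m : (0 < m)%N ->
  hfrak nu gamma m p q / m%:R = \tr (Xmat nu gamma p q *m mxpow (Ymat nu p q) m.-1).
Proof. by move=> m_gt0; rewrite /hfrak [_%:R * _]mulrC mulfK // pnatr_eq0 -lt0n. Qed.

Section Toda.
Variables (R : realType) (N : nat) (nu gamma : R) (p q : 'I_N -> R).
Hypotheses (nu_neq0 : nu != 0) (p_gt0 : forall i, 0 < p i) (q_inj : injective q).

Definition ex (a : 'I_N) : R := expR (nu / 2 * q a).
Definition rp (a : 'I_N) : R := Num.sqrt (p a).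

Lemma ex_neq0 a : ex a != 0. Proof. by rewrite gt_eqF // expR_gt0. Qed.
Lemma rp_neq0 a : rp a != 0. Proof. by rewrite gt_eqF // sqrtr_gt0. Qed.
Lemma p_neq0 a : p a != 0. Proof. by rewrite gt_eqF. Qed.
Lemma p_rp a : p a = rp a ^+ 2. Proof. by rewrite sqr_sqrtr // ltW. Qed.
Lemma sqrt_pM a b : Num.sqrt (p a * p b) = rp a * rp b.
Proof. by rewrite sqrtrM // ltW. Qed.

Definition xq a b := nu / 2 * (q a - q b).

Lemma expR_xq a b : expR (xq a b) = ex a / ex b.
Proof. by rewrite /xq mulrBr expRB. Qed.
Lemma expR_Nxq a b : expR (- xq a b) = ex b / ex a.
Proof. by rewrite /xq -mulrN opprB -/(xq b a) expR_xq. Qed.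
Lemma coshR_xq a b : coshR (xq a b) = (ex a / ex b + ex b / ex a) / 2.
Proof. by rewrite /coshR expR_xq expR_Nxq. Qed.
Lemma sinhR_xq a b : sinhR (xq a b) = (ex a / ex b - ex b / ex a) / 2.
Proof. by rewrite /sinhR expR_xq expR_Nxq. Qed.

Lemma expR_abs_lt a b : q a < q b -> expR (nu * `|q a - q b|) = (ex b / ex a) ^+ 2.
Proof.
move=> ab; rewrite ltr0_norm ?subr_lt0 // opprB -expR_xq -expRM_natr /xq.
by congr expR; rewrite mulrAC divfK // pnatr_eq0.
Qed.
Lemma expR_abs_gt a b : q b < q a -> expR (nu * `|q a - q b|) = (ex a / ex b) ^+ 2.
Proof. by move=> ba; rewrite distrC expR_abs_lt. Qed.
Lemma expR_Nabs_lt a b : q a < q b -> expR (- (nu * `|q a - q b|)) = (ex a / ex b) ^+ 2.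
Proof. by move=> ab; rewrite expRN expR_abs_lt // -exprVn invf_div. Qed.
Lemma expR_Nabs_gt a b : q b < q a -> expR (- (nu * `|q a - q b|)) = (ex b / ex a) ^+ 2.
Proof. by move=> ba; rewrite distrC expR_Nabs_lt. Qed.
Lemma expR_abs_diag a : expR (nu * `|q a - q a|) = 1.
Proof. by rewrite subrr normr0 mulr0 expR0. Qed.
Lemma expR_Nabs_diag a : expR (- (nu * `|q a - q a|)) = 1.
Proof. by rewrite subrr normr0 mulr0 oppr0 expR0. Qed.

Lemma sgnq_lt a b : q a < q b -> sgnq q a b = -1.
Proof. by move=> ab; rewrite /sgnq ltr0_sg // subr_lt0. Qed.
Lemma sgnq_gt a b : q b < q a -> sgnq q a b = 1.
Proof. by move=> ba; rewrite /sgnq gtr0_sg // subr_gt0. Qed.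
Lemma sgnq_diag a : sgnq q a a = 0.
Proof. by rewrite /sgnq subrr sgr0. Qed.

(* Entries of X and Y, their derivatives in the variable q_a - q_b, and the
   coefficients of the second bracket: pp_coef x k = {p_x, p_k}_2 / p_x,
   qp_coef x k = {q_x, p_k}_2 and qq_coef x k = {q_x, q_k}_2. *)
Definition Xe a b := Num.sqrt (p a * p b) * coshR (xq a b)
  + gamma / 2 * (Num.sqrt (p a * p b) * sinhR (xq a b)).
Definition Ye a b := Num.sqrt (p a * p b) * sgnq q a b * sinhR (xq a b)
  + Num.sqrt (p a * p b) * sinhR (xq a b).
Definition dXe a b := Num.sqrt (p a * p b) * (nu / 2 * sinhR (xq a b))
  + gamma / 2 * (Num.sqrt (p a * p b) * (nu / 2 * coshR (xq a b))).
(* The factor sgn^2 kills the diagonal, where q_a - q_b is constant, and the sign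
   is locally constant off the diagonal. *)
Definition dYe a b := sgnq q a b ^+ 2 *
  (Num.sqrt (p a * p b) * sgnq q a b * (nu / 2 * coshR (xq a b))
   + Num.sqrt (p a * p b) * (nu / 2 * coshR (xq a b))).
Definition pp_coef x k := nu / 4 * sgnq q x k * p k * (Qc gamma nu q x k - 4).
Definition qp_coef x k := - (1 / 4) * p k * Sc gamma nu q x k.
Definition qq_coef x k := - (1 / (4 * nu)) * (sgnq q x k * Qc gamma nu q x k).

Ltac field_nz := field; rewrite ?ex_neq0 ?rp_neq0 ?p_neq0 ?nu_neq0 //.

Lemma Xe_ex a b : Xe a b = rp a * rp b *
  ((ex a / ex b + ex b / ex a) / 2 + gamma / 2 * ((ex a / ex b - ex b / ex a) / 2)).
Proof. by rewrite /Xe sqrt_pM coshR_xq sinhR_xq; field_nz. Qed.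
Lemma dXe_ex a b : dXe a b = rp a * rp b * (nu / 2) *
  ((ex a / ex b - ex b / ex a) / 2 + gamma / 2 * ((ex a / ex b + ex b / ex a) / 2)).
Proof. by rewrite /dXe sqrt_pM coshR_xq sinhR_xq; field_nz. Qed.

Lemma Ye_lt a b : q a < q b -> Ye a b = 0.
Proof. by move=> ab; rewrite /Ye sgnq_lt //; field_nz. Qed.
Lemma Ye_gt a b : q b < q a -> Ye a b = rp a * rp b * (ex a / ex b - ex b / ex a).
Proof. by move=> ba; rewrite /Ye sgnq_gt // sqrt_pM sinhR_xq; field_nz. Qed.
Lemma Ye_diag a : Ye a a = 0.
Proof. by rewrite /Ye sgnq_diag sqrt_pM sinhR_xq; field_nz. Qed.

Lemma dYe_lt a b : q a < q b -> dYe a b = 0.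
Proof. by move=> ab; rewrite /dYe sgnq_lt //; field_nz. Qed.
Lemma dYe_gt a b : q b < q a ->
  dYe a b = rp a * rp b * nu * ((ex a / ex b + ex b / ex a) / 2).
Proof. by move=> ba; rewrite /dYe sgnq_gt // sqrt_pM coshR_xq; field_nz. Qed.
Lemma dYe_diag a : dYe a a = 0.
Proof. by rewrite /dYe sgnq_diag; field_nz. Qed.

Lemma pp_coef_lt a b : q a < q b -> pp_coef a b = - (nu / 4) * rp b ^+ 2 *
  ((gamma - 2) * (ex b / ex a) ^+ 2 - (gamma + 2) * (ex a / ex b) ^+ 2).
Proof.
by move=> ab; rewrite /pp_coef /Qc sgnq_lt // expR_abs_lt // expR_Nabs_lt // p_rp; field_nz.
Qed.
Lemma pp_coef_gt a b : q b < q a -> pp_coef a b = nu / 4 * rp b ^+ 2 *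
  ((gamma - 2) * (ex a / ex b) ^+ 2 - (gamma + 2) * (ex b / ex a) ^+ 2).
Proof.
by move=> ba; rewrite /pp_coef /Qc sgnq_gt // expR_abs_gt // expR_Nabs_gt // p_rp; field_nz.
Qed.
Lemma pp_coef_diag a : pp_coef a a = 0.
Proof. by rewrite /pp_coef sgnq_diag; field_nz. Qed.

Lemma qp_coef_lt a b : q a < q b -> qp_coef a b = - (1 / 4) * rp b ^+ 2 *
  ((gamma - 2) * (ex b / ex a) ^+ 2 + (gamma + 2) * (ex a / ex b) ^+ 2).
Proof. by move=> ab; rewrite /qp_coef /Sc expR_abs_lt // expR_Nabs_lt // p_rp. Qed.
Lemma qp_coef_gt a b : q b < q a -> qp_coef a b = - (1 / 4) * rp b ^+ 2 *
  ((gamma - 2) * (ex a / ex b) ^+ 2 + (gamma + 2) * (ex b / ex a) ^+ 2).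
Proof. by move=> ba; rewrite /qp_coef /Sc expR_abs_gt // expR_Nabs_gt // p_rp. Qed.
Lemma qp_coef_diag a : qp_coef a a = - (1 / 4) * rp a ^+ 2 * (2 * gamma).
Proof. by rewrite /qp_coef /Sc expR_abs_diag expR_Nabs_diag p_rp; field_nz. Qed.

Lemma qq_coef_lt a b : q a < q b -> qq_coef a b = 1 / (4 * nu) *
  ((gamma - 2) * (ex b / ex a) ^+ 2 - (gamma + 2) * (ex a / ex b) ^+ 2 + 4).
Proof.
by move=> ab; rewrite /qq_coef /Qc sgnq_lt // expR_abs_lt // expR_Nabs_lt //; field_nz.
Qed.
Lemma qq_coef_gt a b : q b < q a -> qq_coef a b = - (1 / (4 * nu)) *
  ((gamma - 2) * (ex a / ex b) ^+ 2 - (gamma + 2) * (ex b / ex a) ^+ 2 + 4).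
Proof.
by move=> ba; rewrite /qq_coef /Qc sgnq_gt // expR_abs_gt // expR_Nabs_gt //; field_nz.
Qed.
Lemma qq_coef_diag a : qq_coef a a = 0.
Proof. by rewrite /qq_coef sgnq_diag; field_nz. Qed.

(* Splits on the relative order of the q's of all pairs of indices in context,
   closing the order relations transitively; equal q's force equal indices. *)
Ltac case_order := repeat match goal with
  | x : 'I_N, y : 'I_N |- _ =>
     assert_fails (constr_eq x y);
     lazymatch goal with
     | _ : is_true (q x < q y) |- _ => fail
     | _ : is_true (q y < q x) |- _ => fail
     | _ => case: (ltgtP (q x) (q y)) => [?|?|/q_inj ?]; [ | | subst ];
       repeat match goal with
       | h1 : is_true (q ?x < q ?y), h2 : is_true (q ?y < q ?z) |- _ =>
         lazymatch goal with
         | _ : is_true (q x < q z) |- _ => fail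
         | _ => have := lt_trans h1 h2; move=> ?
         end
       end
     end
  end.

Ltac rewrite_entries := repeat match goal with h : is_true (q ?x < q ?y) |- _ =>
  rewrite ?(Ye_lt h) ?(Ye_gt h) ?(dYe_lt h) ?(dYe_gt h) ?(pp_coef_lt h)
    ?(pp_coef_gt h) ?(qp_coef_lt h) ?(qp_coef_gt h) ?(qq_coef_lt h)
    ?(qq_coef_gt h); clear h end;
  rewrite ?Ye_diag ?dYe_diag ?pp_coef_diag ?qp_coef_diag ?qq_coef_diag
    ?Xe_ex ?dXe_ex ?p_rp.

(* Summands of the two sides of the identities for m = 1, 2, 3 once the traces are
   expanded, indexed by the summation indices a1, ..., am and the free index. *)
Definition lhs_p1 a1 k :=
  dXe k a1 * Ye a1 k - Xe k a1 * dYe a1 k + (Xe a1 k * dYe k a1 - dXe a1 k * Ye k a1).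
Definition rhs_p1 a1 k := Xe a1 a1 * pp_coef a1 k.

Definition lhs_p2 a1 a2 k :=
  dXe k a2 * Ye a2 a1 * Ye a1 k - Xe k a2 * Ye a2 a1 * dYe a1 k
  + (Xe a1 k * dYe k a2 * Ye a2 a1 - dXe a1 k * Ye k a2 * Ye a2 a1)
  + (Xe a1 a2 * Ye a2 k * dYe k a1 - Xe a1 a2 * dYe a2 k * Ye k a1).
Definition rhs_p2 a1 a2 k :=
  Xe a1 a2 * Ye a2 a1 * (pp_coef a1 k + pp_coef a2 k)
  + (qp_coef a1 k - qp_coef a2 k) * (dXe a1 a2 * Ye a2 a1)
  + (qp_coef a2 k - qp_coef a1 k) * (Xe a1 a2 * dYe a2 a1).

Definition lhs_p3 a1 a2 a3 k :=
  dXe k a2 * Ye a2 a3 * Ye a3 a1 * Ye a1 k - Xe k a2 * Ye a2 a3 * Ye a3 a1 * dYe a1 k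
  + (Xe a1 k * dYe k a2 * Ye a2 a3 * Ye a3 a1 - dXe a1 k * Ye k a2 * Ye a2 a3 * Ye a3 a1)
  + (Xe a1 a2 * Ye a2 k * dYe k a3 * Ye a3 a1 - Xe a1 a2 * dYe a2 k * Ye k a3 * Ye a3 a1)
  + (Xe a1 a2 * Ye a2 a3 * Ye a3 k * dYe k a1 - Xe a1 a2 * Ye a2 a3 * dYe a3 k * Ye k a1).
Definition rhs_p3 a1 a2 a3 k :=
  Xe a1 a2 * Ye a2 a3 * Ye a3 a1 * (pp_coef a1 k + pp_coef a2 k + pp_coef a3 k)
  + (qp_coef a1 k - qp_coef a2 k) * (dXe a1 a2 * Ye a2 a3 * Ye a3 a1)
  + (qp_coef a2 k - qp_coef a3 k) * (Xe a1 a2 * dYe a2 a3 * Ye a3 a1)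
  + (qp_coef a3 k - qp_coef a1 k) * (Xe a1 a2 * Ye a2 a3 * dYe a3 a1).

Definition lhs_q1 a1 i := - (p i)^-1 * (Xe i a1 * Ye a1 i + Xe a1 i * Ye i a1).
Definition rhs_q1 a1 i := Xe a1 a1 * (- (p a1)^-1 * qp_coef i a1).

Definition lhs_q2 a1 a2 i := - (p i)^-1 *
  (Xe i a2 * Ye a2 a1 * Ye a1 i + Xe a1 i * Ye i a2 * Ye a2 a1
   + Xe a1 a2 * Ye a2 i * Ye i a1).
Definition rhs_q2 a1 a2 i :=
  Xe a1 a2 * Ye a2 a1 * (- (p a1)^-1 * qp_coef i a1 - (p a2)^-1 * qp_coef i a2)
  + (qq_coef a1 i - qq_coef a2 i) * (dXe a1 a2 * Ye a2 a1)
  + (qq_coef a2 i - qq_coef a1 i) * (Xe a1 a2 * dYe a2 a1).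

Definition lhs_q3 a1 a2 a3 i := - (p i)^-1 *
  (Xe i a2 * Ye a2 a3 * Ye a3 a1 * Ye a1 i + Xe a1 i * Ye i a2 * Ye a2 a3 * Ye a3 a1
   + Xe a1 a2 * Ye a2 i * Ye i a3 * Ye a3 a1 + Xe a1 a2 * Ye a2 a3 * Ye a3 i * Ye i a1).
Definition rhs_q3 a1 a2 a3 i :=
  Xe a1 a2 * Ye a2 a3 * Ye a3 a1 *
    (- (p a1)^-1 * qp_coef i a1 - (p a2)^-1 * qp_coef i a2 - (p a3)^-1 * qp_coef i a3)
  + (qq_coef a1 i - qq_coef a2 i) * (dXe a1 a2 * Ye a2 a3 * Ye a3 a1)
  + (qq_coef a2 i - qq_coef a3 i) * (Xe a1 a2 * dYe a2 a3 * Ye a3 a1)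
  + (qq_coef a3 i - qq_coef a1 i) * (Xe a1 a2 * Ye a2 a3 * dYe a3 a1).

Lemma summand_p1 a1 k : lhs_p1 a1 k = rhs_p1 a1 k.
Proof. rewrite /lhs_p1 /rhs_p1; case_order; rewrite_entries; field_nz. Qed.

Lemma summand_p2 a1 a2 k : lhs_p2 a1 a2 k = rhs_p2 a1 a2 k.
Proof. rewrite /lhs_p2 /rhs_p2; case_order; rewrite_entries; field_nz. Qed.

Lemma summand_p3 a1 a2 a3 k : lhs_p3 a1 a2 a3 k = rhs_p3 a1 a2 a3 k.
Proof. rewrite /lhs_p3 /rhs_p3; case_order; rewrite_entries; field_nz. Qed.

Lemma summand_q1 a1 i : lhs_q1 a1 i - rhs_q1 a1 i = lhs_q1 a1 a1 - rhs_q1 a1 a1.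
Proof. rewrite /lhs_q1 /rhs_q1; case_order; rewrite_entries; field_nz. Qed.

Lemma summand_q2 a1 a2 i :
  lhs_q2 a1 a2 i - rhs_q2 a1 a2 i = lhs_q2 a1 a2 a1 - rhs_q2 a1 a2 a1.
Proof. rewrite /lhs_q2 /rhs_q2; case_order; rewrite_entries; field_nz. Qed.

Lemma summand_q3 a1 a2 a3 i :
  lhs_q3 a1 a2 a3 i - rhs_q3 a1 a2 a3 i = lhs_q3 a1 a2 a3 a1 - rhs_q3 a1 a2 a3 a1.
Proof. rewrite /lhs_q3 /rhs_q3; case_order; rewrite_entries; field_nz. Qed.

Section TraceExpansion.
Variables (X Y dX dY : 'M[R]_N).
Hypotheses (X_E : forall a b, X a b = Xe a b) (Y_E : forall a b, Y a b = Ye a b)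
  (dX_E : forall a b, dX a b = dXe a b) (dY_E : forall a b, dY a b = dYe a b).

Local Notation E i := (delta_mx i i).

(* The derivatives of tr (X Y^n) in q_k and in p_x, and the second brackets
   {tr (X Y^n), p_k}_2 and {tr (X Y^n), q_i}_2 written through them. *)
Definition dq_trace n k :=
  \tr ((E k *m dX - dX *m E k) *m mxpow Y n + X *m mxpow_deriv Y (E k *m dY - dY *m E k) n).
Definition dp_trace n x :=
  \tr (((2 * p x)^-1 *: (E x *m X + X *m E x)) *m mxpow Y n
       + X *m mxpow_deriv Y ((2 * p x)^-1 *: (E x *m Y + Y *m E x)) n).
Definition bracket2_p n k :=
  \sum_(x < N) (dp_trace n x * (p x * pp_coef x k) + dq_trace n x * qp_coef x k).
Definition bracket2_q n i :=
  \sum_(x < N) (- dp_trace n x * qp_coef i x + dq_trace n x * qq_coef x i).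

Lemma bracket2_q_sub n i j :
  \sum_(x < N) (- dp_trace n x * (qp_coef i x - qp_coef j x)
                + dq_trace n x * (qq_coef x i - qq_coef x j))
  = bracket2_q n i - bracket2_q n j.
Proof. by rewrite /bracket2_q -sumrB; apply: eq_bigr => x _; ring. Qed.

Ltac expand_trace := rewrite /=;
  rewrite ?mulmx1 ?mulmx0 ?addr0;
  rewrite -?(scalemxAl, scalemxAr);
  rewrite ?(mulmxDl, mulmxDr, mulmxBl, mulmxBr, mulmxN, mulNmx, scalerDr, scalerBr);
  rewrite -?(scalemxAl, scalemxAr);
  rewrite ?(mxtraceD, raddfB, raddfN, mxtraceZ, mxtrace0) /=;
  rewrite -?mulmxA;
  rewrite ?(mxtrace_delta0, mxtrace_delta1, mxtrace_delta2, mxtrace_delta3,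
    mxtrace_delta4, mxtrace_deltar1, mxtrace_deltar2, mxtrace_deltar3,
    mxtrace_deltar4);
  rewrite -?mulmxA ?mulmx4_diag ?mulmx3_diag ?mulmx2_diag.
Ltac merge_sums1 := do 4 rewrite ?(sum1D, sum1B, sum1Zl, sum1Zr, sum1N).
Ltac merge_sums2 := do 4 rewrite ?(sum2D, sum2B, sum2Zl, sum2Zr, sum2N).
Ltac merge_sums3 := do 4 rewrite ?(sum3D, sum3B, sum3Zl, sum3N).
Ltac entries := rewrite ?X_E ?Y_E ?dX_E ?dY_E.

Lemma recursion_p1 k : dq_trace 1 k = bracket2_p 0 k.
Proof.
rewrite /bracket2_p /dq_trace /dp_trace; expand_trace; merge_sums1.
under eq_bigr => x _ do expand_trace.
rewrite /sum1; apply: eq_bigr => x _; entries.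
transitivity (lhs_p1 x k); first by rewrite /lhs_p1; field.
by rewrite summand_p1 /rhs_p1; field_nz.
Qed.

Lemma recursion_p2 k : dq_trace 2 k = bracket2_p 1 k.
Proof.
rewrite /bracket2_p /dq_trace /dp_trace; expand_trace; merge_sums2.
under eq_bigr => x _ do (expand_trace; merge_sums1).
apply: sum2_sym => x y; entries.
transitivity (lhs_p2 x y k + lhs_p2 y x k); first by rewrite /lhs_p2; field.
by rewrite !summand_p2 /rhs_p2; field_nz.
Qed.

Lemma recursion_p3 k : dq_trace 3 k = bracket2_p 2 k.
Proof.
rewrite /bracket2_p /dq_trace /dp_trace; expand_trace; merge_sums3.
under eq_bigr => x _ do (expand_trace; merge_sums2).
apply: sum3_sym => x y z; entries.
transitivity (lhs_p3 x y z k + lhs_p3 y z x k + lhs_p3 z x y k).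
  by rewrite /lhs_p3; field_nz.
by rewrite !summand_p3 /rhs_p3; field_nz.
Qed.

Lemma recursion_q1 i j : - dp_trace 1 i - bracket2_q 0 i = - dp_trace 1 j - bracket2_q 0 j.
Proof.
rewrite /bracket2_q /dq_trace /dp_trace.
under eq_bigr => x _ do expand_trace.
under [in RHS]eq_bigr => x _ do expand_trace.
expand_trace; merge_sums1.
rewrite /sum1; apply: eq_bigr => x _; entries.
transitivity (lhs_q1 x i - rhs_q1 x i); first by rewrite /lhs_q1 /rhs_q1; field_nz.
rewrite summand_q1; symmetry.
transitivity (lhs_q1 x j - rhs_q1 x j); first by rewrite /lhs_q1 /rhs_q1; field_nz.
by rewrite summand_q1.
Qed.

Lemma recursion_q2 i j : - dp_trace 2 i - bracket2_q 1 i = - dp_trace 2 j - bracket2_q 1 j.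
Proof.
rewrite /bracket2_q /dq_trace /dp_trace.
under eq_bigr => x _ do (expand_trace; merge_sums1).
under [in RHS]eq_bigr => x _ do (expand_trace; merge_sums1).
expand_trace; merge_sums2.
apply: sum2_sym => x y; entries.
transitivity ((lhs_q2 x y i - rhs_q2 x y i) + (lhs_q2 y x i - rhs_q2 y x i)).
  by rewrite /lhs_q2 /rhs_q2; field_nz.
rewrite (summand_q2 x y i) (summand_q2 y x i); symmetry.
transitivity ((lhs_q2 x y j - rhs_q2 x y j) + (lhs_q2 y x j - rhs_q2 y x j)).
  by rewrite /lhs_q2 /rhs_q2; field_nz.
by rewrite (summand_q2 x y j) (summand_q2 y x j).
Qed.

Lemma recursion_q3 i j : - dp_trace 3 i - bracket2_q 2 i = - dp_trace 3 j - bracket2_q 2 j.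
Proof.
rewrite /bracket2_q /dq_trace /dp_trace.
under eq_bigr => x _ do (expand_trace; merge_sums2).
under [in RHS]eq_bigr => x _ do (expand_trace; merge_sums2).
expand_trace; merge_sums3.
apply: sum3_sym => x y z; entries.
transitivity ((lhs_q3 x y z i - rhs_q3 x y z i) + (lhs_q3 y z x i - rhs_q3 y z x i)
  + (lhs_q3 z x y i - rhs_q3 z x y i)).
  by rewrite /lhs_q3 /rhs_q3; field_nz.
rewrite (summand_q3 x y z i) (summand_q3 y z x i) (summand_q3 z x y i); symmetry.
transitivity ((lhs_q3 x y z j - rhs_q3 x y z j) + (lhs_q3 y z x j - rhs_q3 y z x j)
  + (lhs_q3 z x y j - rhs_q3 z x y j)).
  by rewrite /lhs_q3 /rhs_q3; field_nz.
by rewrite (summand_q3 x y z j) (summand_q3 y z x j) (summand_q3 z x y j).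
Qed.

End TraceExpansion.

Definition dXmat : 'M[R]_N := \matrix_(a, b) dXe a b.
Definition dYmat : 'M[R]_N := \matrix_(a, b) dYe a b.

Lemma Xmat_E a b : Xmat nu gamma p q a b = Xe a b.
Proof. by rewrite !mxE. Qed.
Lemma Ymat_E a b : Ymat nu p q a b = Ye a b.
Proof. by rewrite !mxE. Qed.
Lemma dXmat_E a b : dXmat a b = dXe a b.
Proof. by rewrite mxE. Qed.
Lemma dYmat_E a b : dYmat a b = dYe a b.
Proof. by rewrite mxE. Qed.

Lemma upd_id (x : 'I_N -> R) i : upd x i (x i) = x.
Proof. by apply/funext => a; rewrite /upd; case: eqP => [->|]. Qed.

Lemma is_derive_upd (x : 'I_N -> R) i a (t : R) :
  is_derive t 1 (fun s => upd x i s a) (a == i)%:R.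
Proof.
rewrite /upd; case: eqP => _ /=; last exact: is_derive_cst.
exact: is_derive_id.
Qed.

Lemma is_derive_sqrt_pM i a b :
  is_derive (p i) 1 (fun t => Num.sqrt (upd p i t a * upd p i t b))
    ((2 * p i)^-1 * (((a == i)%:R + (b == i)%:R) * Num.sqrt (p a * p b))).
Proof.
have hu := is_derive_mul (is_derive_upd p i a (p i)) (is_derive_upd p i b (p i)).
have hs : is_derive (upd p i (p i) a * upd p i (p i) b) 1 Num.sqrt
    (2 * Num.sqrt (p a * p b))^-1.
  by rewrite upd_id; apply: is_derive1_sqrt; rewrite mulr_gt0.
have := is_derive1_comp (f := Num.sqrt) (g := fun t => upd p i t a * upd p i t b) hs hu.
rewrite upd_id => H.
apply: is_derive_eq H _; rewrite sqrt_pM.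
by case: (eqVneq a i) => [->|ai]; case: (eqVneq b i) => [->|bi];
  rewrite ?eqxx ?(negPf ai) ?(negPf bi) ?p_rp /= ?(mul0r, mulr0, addr0) //; field_nz.
Qed.

Lemma is_derive_Xmat_p i : is_derive_mx (fun t => Xmat nu gamma (upd p i t) q) (p i)
  ((2 * p i)^-1 *: (delta_mx i i *m Xmat nu gamma p q + Xmat nu gamma p q *m delta_mx i i)).
Proof.
rewrite /Xmat => a b.
have H := is_derive_add
  (is_derive_mul (is_derive_sqrt_pM i a b) (is_derive_cst (coshR (xq a b)) (p i) 1))
  (is_derive_scale (gamma / 2)
    (is_derive_mul (is_derive_sqrt_pM i a b) (is_derive_cst (sinhR (xq a b)) (p i) 1))).
under [fun s => _]funext => s do rewrite !mxE.
apply: is_derive_eq H _.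
by rewrite delta_mx_anticommE !mxE /cst upd_id /xq; ring.
Qed.

Lemma is_derive_Ymat_p i : is_derive_mx (fun t => Ymat nu (upd p i t) q) (p i)
  ((2 * p i)^-1 *: (delta_mx i i *m Ymat nu p q + Ymat nu p q *m delta_mx i i)).
Proof.
rewrite /Ymat => a b.
have H := is_derive_add
  (is_derive_mul (is_derive_sqrt_pM i a b)
     (is_derive_cst (sgnq q a b * sinhR (xq a b)) (p i) 1))
  (is_derive_mul (is_derive_sqrt_pM i a b) (is_derive_cst (sinhR (xq a b)) (p i) 1)).
under [fun s => _]funext => s do rewrite !mxE -mulrA.
apply: is_derive_eq H _.
by rewrite delta_mx_anticommE !mxE /cst upd_id /xq; ring.
Qed.

Lemma upd_sub i a b (t : R) :
  upd q i t a - upd q i t b = ((a == i)%:R - (b == i)%:R) * (t - q i) + (q a - q b).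
Proof.
rewrite /upd; case: (eqVneq a i) => [->|ai]; case: (eqVneq b i) => [->|bi];
  by rewrite ?eqxx ?(negPf ai) ?(negPf bi) /=; ring.
Qed.

Lemma is_derive_upd_sub (G : R -> R) dG i a b :
  (a != b -> is_derive (q a - q b) 1 G dG) ->
  is_derive (q i) 1 (fun t => G (upd q i t a - upd q i t b))
    (((a == i)%:R - (b == i)%:R) * dG).
Proof.
case: (eqVneq a b) => [<- _|ab /(_ isT) hG].
  under [fun t => _]funext => t do rewrite subrr.
  by rewrite subrr mul0r; exact: is_derive_cst.
set c := (a == i)%:R - (b == i)%:R.
under [fun t => _]funext => t do rewrite upd_sub -/c.
have hg : is_derive (q i) 1 (fun t => c * (t - q i) + (q a - q b)) c.
  have := is_derive_add (is_derive_scale c (is_derive_sub (is_derive_id (q i) 1)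
    (is_derive_cst (q i) (q i) 1))) (is_derive_cst (q a - q b) (q i) 1).
  by rewrite subr0 mulr1 addr0.
have hG' : is_derive ((fun t => c * (t - q i) + (q a - q b)) (q i)) 1 G dG.
  by rewrite /= subrr mulr0 add0r.
have := is_derive1_comp (f := G) (g := fun t => c * (t - q i) + (q a - q b)) hG' hg.
by rewrite mulrC.
Qed.

Lemma is_derive_Xmat_q i : is_derive_mx (fun t => Xmat nu gamma p (upd q i t)) (q i)
  (delta_mx i i *m dXmat - dXmat *m delta_mx i i).
Proof.
rewrite /Xmat => a b.
have hX (d : R) : is_derive d 1 (fun x => Num.sqrt (p a * p b) * coshR (nu / 2 * x)
    + gamma / 2 * (Num.sqrt (p a * p b) * sinhR (nu / 2 * x)))
  (Num.sqrt (p a * p b) * (nu / 2 * sinhR (nu / 2 * d))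
    + gamma / 2 * (Num.sqrt (p a * p b) * (nu / 2 * coshR (nu / 2 * d)))).
  exact: is_derive_add (is_derive_scale _ (is_derive_coshR_scale _ d))
    (is_derive_scale _ (is_derive_scale _ (is_derive_sinhR_scale _ d))).
have H := @is_derive_upd_sub _ (dXe a b) i a b (fun _ => hX (q a - q b)).
under [fun s => _]funext => s do rewrite !mxE.
apply: is_derive_eq H _.
by rewrite delta_mx_commE !dXmat_E; ring.
Qed.

Lemma is_derive_Ymat_q i : is_derive_mx (fun t => Ymat nu p (upd q i t)) (q i)
  (delta_mx i i *m dYmat - dYmat *m delta_mx i i).
Proof.
rewrite /Ymat => a b; set s := Num.sqrt (p a * p b).
have hY : a != b -> is_derive (q a - q b) 1
    (fun x => s * Num.sg x * sinhR (nu / 2 * x) + s * sinhR (nu / 2 * x)) (dYe a b).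
  move=> ab; have d_neq0 : q a - q b != 0.
    by rewrite subr_eq0; apply: contra ab => /eqP /q_inj ->.
  rewrite /dYe /sgnq sqr_sg d_neq0 mul1r.
  have H := is_derive_add
    (is_derive_scale (s * Num.sg (q a - q b)) (is_derive_sinhR_scale (nu / 2) (q a - q b)))
    (is_derive_scale s (is_derive_sinhR_scale (nu / 2) (q a - q b))).
  apply: (near_eq_is_derive _ H).
  case: (ltgtP (q a - q b) 0) d_neq0 => [dn|dp|->] // _.
    by apply: filterS (lt_nbhsl dn) => y yn; rewrite !ltr0_sg.
  by apply: filterS (lt_nbhsr dp) => y yp; rewrite !gtr0_sg.
have H := @is_derive_upd_sub _ (dYe a b) i a b hY.
under [fun t => _]funext => t do rewrite !mxE /sgnq.
apply: is_derive_eq H _.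
by rewrite delta_mx_commE !dYmat_E; ring.
Qed.

Lemma dP_hfrak m i : (0 < m)%N ->
  dP (fun p' q' => hfrak nu gamma m p' q' / m%:R) p q i =
  dp_trace (Xmat nu gamma p q) (Ymat nu p q) m.-1 i.
Proof.
move=> m_gt0; rewrite /dP derive1E /=.
under [fun t => _]funext => t do rewrite hfrak_div //.
have H := is_derive_mxtrace (is_derive_mxM (is_derive_Xmat_p i)
  (is_derive_mxpow m.-1 (is_derive_Ymat_p i))).
by rewrite (derive_val (is_derive := H)) upd_id.
Qed.

Lemma dQ_hfrak m i : (0 < m)%N ->
  dQ (fun p' q' => hfrak nu gamma m p' q' / m%:R) p q i =
  dq_trace (Xmat nu gamma p q) (Ymat nu p q) dXmat dYmat m.-1 i.
Proof.
move=> m_gt0; rewrite /dQ derive1E /=.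
under [fun t => _]funext => t do rewrite hfrak_div //.
have H := is_derive_mxtrace (is_derive_mxM (is_derive_Xmat_q i)
  (is_derive_mxpow m.-1 (is_derive_Ymat_q i))).
by rewrite (derive_val (is_derive := H)) upd_id.
Qed.

Lemma dP_pcoord k y : dP (pcoord k) p q y = (y == k)%:R.
Proof.
rewrite /dP derive1E /pcoord /upd eq_sym.
case: (eqVneq y k) => _ /=; last exact: (derive_val (is_derive := is_derive_cst _ _ _)).
exact: (derive_val (is_derive := is_derive_id _ _)).
Qed.
Lemma dQ_pcoord k y : dQ (pcoord k) p q y = 0.
Proof. by rewrite /dQ derive1E /pcoord; exact: (derive_val (is_derive := is_derive_cst _ _ _)). Qed.
Lemma dP_qdiff i j y : dP (qdiff i j) p q y = 0.
Proof. by rewrite /dP derive1E /qdiff; exact: (derive_val (is_derive := is_derive_cst _ _ _)). Qed.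
Lemma dQ_qdiff i j y : dQ (qdiff i j) p q y = (i == y)%:R - (j == y)%:R.
Proof.
rewrite /dQ derive1E /qdiff.
exact: (derive_val (is_derive :=
  is_derive_sub (is_derive_upd q y i (q y)) (is_derive_upd q y j (q y)))).
Qed.

Lemma eqF_sym (a b : 'I_N) : a != b -> (b == a) = false.
Proof. by rewrite eq_sym => /negPf. Qed.

Lemma sum_single (f : 'I_N -> R) k : (forall y, y != k -> f y = 0) ->
  \sum_(y < N) f y = f k.
Proof. by move=> f0; rewrite (bigD1 k) //= big1 ?addr0 // => y /f0. Qed.

Lemma sum_delta_sub (g : 'I_N -> R) i j :
  \sum_(y < N) ((i == y)%:R - (j == y)%:R) * g y = g i - g j.
Proof.
under eq_bigr => y _ do rewrite mulrBl.
rewrite sumrB (@sum_single _ i) ?eqxx ?mul1r => [|y yi]; last first.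
  by rewrite eq_sym (negPf yi) mul0r.
rewrite (@sum_single _ j) ?eqxx ?mul1r // => y yj.
by rewrite eq_sym (negPf yj) mul0r.
Qed.

Lemma PB1_pcoord F k : PB (@B1 R N) F (pcoord k) p q = dQ F p q k.
Proof.
rewrite /PB /= (@sum_single _ k) => [|x xk].
  rewrite (@sum_single _ k) => [|y yk]; rewrite !dP_pcoord !dQ_pcoord ?eqxx /=.
    by ring.
  by rewrite ?(negPf yk) ?(eqF_sym yk) /=; ring.
rewrite (@sum_single _ k) => [|y yk]; rewrite !dP_pcoord !dQ_pcoord ?eqxx.
  by rewrite ?(negPf xk) ?(eqF_sym xk) /=; ring.
by rewrite ?(negPf yk) ?(eqF_sym yk) /=; ring.
Qed.

Lemma PB2_pcoord F k : PB (@B2 R N gamma nu) F (pcoord k) p q =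
  \sum_(x < N) (dP F p q x * (p x * pp_coef x k) + dQ F p q x * qp_coef x k).
Proof.
rewrite /PB /=; apply: eq_bigr => x _.
rewrite (@sum_single _ k) => [|y yk]; rewrite !dP_pcoord !dQ_pcoord ?eqxx.
  by rewrite /pp_coef /qp_coef /=; ring.
by rewrite ?(negPf yk) ?(eqF_sym yk) /=; ring.
Qed.

Lemma PB1_qdiff F i j : PB (@B1 R N) F (qdiff i j) p q = - (dP F p q i - dP F p q j).
Proof.
rewrite /PB /=.
transitivity (\sum_(x < N) ((i == x)%:R - (j == x)%:R) * (- dP F p q x)); last first.
  by rewrite sum_delta_sub; ring.
apply: eq_bigr => x _; rewrite (@sum_single _ x) => [|y yx];
  rewrite !dP_qdiff !dQ_qdiff ?eqxx /=; first by ring.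
by rewrite ?(negPf yx) ?(eqF_sym yx) /=; ring.
Qed.

Lemma PB2_qdiff F i j : PB (@B2 R N gamma nu) F (qdiff i j) p q =
  \sum_(x < N) (- dP F p q x * (qp_coef i x - qp_coef j x)
                + dQ F p q x * (qq_coef x i - qq_coef x j)).
Proof.
rewrite /PB /=; apply: eq_bigr => x _.
transitivity (\sum_(y < N) ((i == y)%:R - (j == y)%:R) *
    (- dP F p q x * qp_coef y x + dQ F p q x * qq_coef x y)).
  by apply: eq_bigr => y _; rewrite !dP_qdiff !dQ_qdiff /qp_coef /qq_coef; ring.
by rewrite sum_delta_sub; ring.
Qed.

Lemma bracket_recursion m i j k : (1 <= m <= 3)%N ->
    PB (@B1 R N) (fun p' q' => hfrak nu gamma m.+1 p' q' / (m.+1)%:R) (pcoord k) p q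
      = PB (@B2 R N gamma nu) (fun p' q' => hfrak nu gamma m p' q' / m%:R) (pcoord k) p q
 /\ PB (@B1 R N) (fun p' q' => hfrak nu gamma m.+1 p' q' / (m.+1)%:R) (qdiff i j) p q
      = PB (@B2 R N gamma nu) (fun p' q' => hfrak nu gamma m p' q' / m%:R) (qdiff i j) p q.
Proof.
move=> /andP[m_ge1 m_le3].
rewrite PB1_pcoord PB2_pcoord PB1_qdiff PB2_qdiff !dQ_hfrak // !dP_hfrak //.
under eq_bigr => x _ do rewrite dP_hfrak // dQ_hfrak //.
under [in X in _ /\ _ = X]eq_bigr => x _ do rewrite dP_hfrak // dQ_hfrak //.
rewrite bracket2_q_sub.
have indep (a b c d : R) : - a - c = - b - d -> - (a - b) = c - d by lra.
case: m m_ge1 m_le3 => [|[|[|[|m]]]] // _ _; split.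
- by apply: recursion_p1 => a b; rewrite ?(Xmat_E, Ymat_E, dXmat_E, dYmat_E).
- by apply/indep/recursion_q1 => a b; rewrite ?(Xmat_E, Ymat_E, dXmat_E, dYmat_E).
- by apply: recursion_p2 => a b; rewrite ?(Xmat_E, Ymat_E, dXmat_E, dYmat_E).
- by apply/indep/recursion_q2 => a b; rewrite ?(Xmat_E, Ymat_E, dXmat_E, dYmat_E).
- by apply: recursion_p3 => a b; rewrite ?(Xmat_E, Ymat_E, dXmat_E, dYmat_E).
- by apply/indep/recursion_q3 => a b; rewrite ?(Xmat_E, Ymat_E, dXmat_E, dYmat_E).
Qed.

End Toda.

Theorem mainTheorem11 (R : realType) (N : nat) (nu gamma : R)
  (p q : 'I_N -> R) :
  (2 <= N)%N -> nu != 0 -> gamma != 2 -> gamma != -2 ->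
  (forall i, 0 < p i) -> injective q ->
  forall m : nat, (1 <= m <= 3)%N ->
  forall i j k : 'I_N,
    PB (@B1 R N) (fun p' q' => hfrak nu gamma m.+1 p' q' / (m.+1)%:R) (pcoord k) p q
      = PB (@B2 R N gamma nu) (fun p' q' => hfrak nu gamma m p' q' / m%:R) (pcoord k) p q
 /\ PB (@B1 R N) (fun p' q' => hfrak nu gamma m.+1 p' q' / (m.+1)%:R) (qdiff i j) p q
      = PB (@B2 R N gamma nu) (fun p' q' => hfrak nu gamma m p' q' / m%:R) (qdiff i j) p q.
Proof.
move=> _ nu_neq0 _ _ p_gt0 q_inj m m_range i j k.
exact: bracket_recursion.
Qed.
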